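(* There exist an odd-like binary Euclidean LCD $[14,8,4]$ code and an odd-like binary Euclidean LCD $[16,10,4]$ code, and both are optimal, i.e. $4$ is the largest minimum distance among all binary Euclidean LCD $[14,8]$ codes and among all binary Euclidean LCD $[16,10]$ codes.
   Context: A binary $[n,k,d]$ code is a $k$-dimensional subspace of $\mathbb{F}_2^n$ with minimum nonzero Hamming weight $d$. It is Euclidean LCD if $C\cap C^{\perp_E}=\{0\}$, where $C^{\perp_E}$ is the dual with respect to $\langle x,y\rangle_E=\sum x_iy_i$. A binary code is odd-like if it contains a codeword $x$ with $\sum x_i=1$. An LCD $[n,k]$ code is optimal if its minimum distance is the largest among all LCD $[n,k]$ codes. *)

(* Binary linear codes = 'F_2-subspaces of 'rV['F_2]_n. *)
From HB Require Import structures.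
From mathcomp Require Import all_boot all_order all_algebra all_field.
Set Implicit Arguments. Unset Strict Implicit. Unset Printing Implicit Defensive.
Import GRing.Theory.
Local Open Scope ring_scope.

Definition wt n (x : 'rV['F_2]_n) : nat := #|[set i | x 0 i != 0]|.

Definition edot n (x y : 'rV['F_2]_n) : 'F_2 := \sum_i x 0 i * y 0 i.

Definition is_LCD n (C : {vspace 'rV['F_2]_n}) : Prop :=
  forall x, x \in C -> (forall y, y \in C -> edot x y = 0) -> x = 0.

Definition min_dist n (C : {vspace 'rV['F_2]_n}) (d : nat) : Prop :=
  (exists x, [/\ x \in C, x != 0 & wt x = d]) /\
  (forall x, x \in C -> x != 0 -> (d <= wt x)%N).

Definition is_code n k d (C : {vspace 'rV['F_2]_n}) : Prop :=
  \dim C = k /\ min_dist C d.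

Definition odd_like n (C : {vspace 'rV['F_2]_n}) : Prop :=
  exists x, x \in C /\ \sum_i x 0 i = 1.

From mathcomp Require Import all_boot all_order all_algebra all_field.
Set Implicit Arguments. Unset Strict Implicit. Unset Printing Implicit Defensive.
Import GRing.Theory.
Local Open Scope ring_scope.

(* Existence: each code is the span of an explicit generator table [G], and
   its three properties are checked by computation over all [2^k] messages
   [bs]: every nonzero codeword has weight at least 4, every nonzero codeword
   has odd inner product with some row of [G] (so it is not in the dual), and
   some row of [G] has odd weight.
   Optimality needs no LCD hypothesis: if [C] had minimum distance at least 5,
   the translates [e + C] by the words [e] of weight 2 would be pairwise
   disjoint, giving [C(n,2) 2^k <= 2^n]; but [91 * 2^8 > 2^14] and
   [120 * 2^10 > 2^16]. *)

Lemma natr_F2_odd (m : nat) : m%:R = (odd m)%:R :> 'F_2.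
Proof. by rewrite -modn2 Fp_nat_mod. Qed.

Lemma F2_natb (a : 'F_2) : a = (a != 0)%:R.
Proof. by case: a => -[|[|m]] Hm; apply/val_inj. Qed.

Lemma natb_F2_eq0 (b : bool) : ((b%:R : 'F_2) == 0) = ~~ b.
Proof. by case: b. Qed.

Lemma sum_F2_natb (P : pred nat) m :
  \sum_(i < m) (P i)%:R = (odd (count P (iota 0 m)))%:R :> 'F_2.
Proof.
rewrite -(big_mkord xpredT (fun i => (P i)%:R)) -natr_sum natr_F2_odd.
by rewrite -sum1_count (big_mkcond P) /index_iota subn0.
Qed.

Lemma card_set_ord (P : pred nat) n : #|[set i : 'I_n | P i]| = count P (iota 0 n).
Proof. by rewrite cardsE cardE /enum_mem size_filter -enumT -val_enum_ord count_map. Qed.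

Lemma wt_eq0 n (x : 'rV['F_2]_n) : (wt x == 0%N) = (x == 0).
Proof.
rewrite /wt cards_eq0; apply/eqP/eqP => [x0 | ->]; last first.
  by apply/setP => i; rewrite !inE mxE eqxx.
apply/rowP => i; rewrite mxE; apply/eqP; apply: contraT => xi_neq0.
by rewrite -(in_set0 i) -x0 inE.
Qed.

Lemma wt0 n : wt (0 : 'rV['F_2]_n) = 0%N.
Proof. by apply/eqP; rewrite wt_eq0. Qed.

Lemma wtB n (x y : 'rV['F_2]_n) : (wt (x - y) <= wt x + wt y)%N.
Proof.
rewrite /wt; apply: leq_trans (leq_card_setU _ _).
apply: subset_leq_card; apply/subsetP => i; rewrite !inE !mxE.
by apply: contraR; rewrite negb_or !negbK => /andP[/eqP-> /eqP->]; rewrite subr0.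
Qed.

Definition bits_row n (s : seq bool) : 'rV['F_2]_n := \row_j (nth false s j)%:R.

Definition wtb n (s : seq bool) : nat := count (nth false s) (iota 0 n).

Definition dotb n (s t : seq bool) : bool :=
  odd (count (fun j => nth false s j && nth false t j) (iota 0 n)).

Lemma wt_bits_row n s : wt (bits_row n s) = wtb n s.
Proof.
rewrite /wtb -card_set_ord; apply: eq_card => j.
by rewrite !inE mxE natb_F2_eq0 negbK.
Qed.

Lemma sum_bits_row n s : \sum_j (bits_row n s) 0 j = (odd (wtb n s))%:R.
Proof. by rewrite -sum_F2_natb; apply: eq_bigr => j _; rewrite mxE. Qed.

Lemma edot_bits_row n s t : edot (bits_row n s) (bits_row n t) = (dotb n s t)%:R.
Proof. by rewrite -sum_F2_natb; apply: eq_bigr => j _; rewrite !mxE -natrM mulnb. Qed.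

Fixpoint bitseqs k : seq (seq bool) :=
  if k is k'.+1 then [seq b :: s | b <- [:: false; true], s <- bitseqs k']
  else [:: [::]].

Lemma bitseqsP k bs : size bs = k -> bs \in bitseqs k.
Proof.
elim: k bs => [|k IH] [|b s] // [/IH s_in].
by apply: (allpairs_f (fun b s => b :: s)); rewrite // !inE; case: b.
Qed.

Definition bits_of k (c : 'I_k -> 'F_2) : seq bool := [seq c i != 0 | i <- enum 'I_k].

Lemma size_bits_of k (c : 'I_k -> 'F_2) : size (bits_of c) = k.
Proof. by rewrite size_map size_enum_ord. Qed.

Lemma nth_bits_of k (c : 'I_k -> 'F_2) (i : 'I_k) : nth false (bits_of c) i = (c i != 0).
Proof. by rewrite (nth_map i) ?size_enum_ord // nth_ord_enum. Qed.

Lemma bits_of_eq0 k (c : 'I_k -> 'F_2) : ~~ has id (bits_of c) -> forall i, c i = 0.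
Proof.
move=> /hasPn c0 i; apply/eqP; rewrite -[_ == _]negbK.
by apply: c0; apply/mapP; exists i; rewrite ?mem_enum.
Qed.

Section GeneratorTable.

Variables (n : nat) (G : seq (seq bool)).
Local Notation k := (size G).

Definition gen_rows : k.-tuple 'rV['F_2]_n := map_tuple (bits_row n) (in_tuple G).

Definition gen_code : {vspace 'rV['F_2]_n} := <<gen_rows>>%VS.

Definition comb_bits (bs : seq bool) : seq bool :=
  [seq dotb k bs [seq nth false r j | r <- G] | j <- iota 0 n].

Definition min_wt_check d : bool :=
  all (fun bs => has id bs ==> (d <= wtb n (comb_bits bs))%N) (bitseqs k).

Definition lcd_check : bool :=
  all (fun bs => has id bs ==> has (dotb n (comb_bits bs)) G) (bitseqs k).

Lemma mem_gen_code r : r \in G -> bits_row n r \in gen_code.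
Proof. by move=> r_in; apply/memv_span/map_f. Qed.

Lemma gen_rows_combE (c : 'I_k -> 'F_2) :
  \sum_i c i *: gen_rows`_i = bits_row n (comb_bits (bits_of c)).
Proof.
apply/rowP => j; rewrite summxE !mxE (nth_map 0%N) ?size_iota // nth_iota // add0n.
rewrite -sum_F2_natb; apply: eq_bigr => i _.
rewrite (nth_map [::]) // nth_bits_of (nth_map [::]) ?size_tuple //= !mxE.
by rewrite [c i]F2_natb -natrM mulnb natb_F2_eq0 negbK.
Qed.

Lemma gen_codeP x : x \in gen_code -> x != 0 ->
  exists bs, [/\ bs \in bitseqs k, has id bs & x = bits_row n (comb_bits bs)].
Proof.
move=> /coord_span -> x_neq0; exists (bits_of (coord gen_rows ^~ x)).
split; last exact: gen_rows_combE.
- exact/bitseqsP/size_bits_of.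
- apply: contraNT x_neq0 => /bits_of_eq0 c0.
  by apply/eqP/big1 => i _; rewrite (c0 i) scale0r.
Qed.

Lemma gen_code_min_wt d x : min_wt_check d -> x \in gen_code -> x != 0 -> (d <= wt x)%N.
Proof.
move=> /allP md x_in x_neq0; have [bs [bs_in bs_neq0 ->]] := gen_codeP x_in x_neq0.
by rewrite wt_bits_row; have /implyP := md _ bs_in; apply.
Qed.

Lemma free_gen_rows d : (0 < d)%N -> min_wt_check d -> free gen_rows.
Proof.
move=> d_gt0 /allP md; apply/freeP => c comb0; apply: bits_of_eq0.
apply: contraTN d_gt0 => c_neq0; rewrite -leqNgt.
have /implyP/(_ c_neq0) := md _ (bitseqsP (size_bits_of c)).
by rewrite -wt_bits_row -gen_rows_combE comb0 wt0.
Qed.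

Lemma gen_code_is_code d : (0 < d)%N -> min_wt_check d ->
  has (fun r => wtb n r == d) G -> is_code k d gen_code.
Proof.
move=> d_gt0 md /hasP[r r_in /eqP wt_r]; split.
  by have /eqP := free_gen_rows d_gt0 md; rewrite size_tuple.
split=> [|x]; last exact: gen_code_min_wt.
exists (bits_row n r); rewrite -wt_eq0 wt_bits_row wt_r -lt0n.
by split=> //; apply: mem_gen_code.
Qed.

Lemma gen_code_LCD : lcd_check -> is_LCD gen_code.
Proof.
move=> /allP lcd x x_in x_orth; apply/eqP; apply: contraT => x_neq0.
have [bs [bs_in bs_neq0 x_def]] := gen_codeP x_in x_neq0.
have /implyP/(_ bs_neq0)/hasP[r r_in dot_r] := lcd _ bs_in.
have /eqP := x_orth _ (mem_gen_code r_in).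
by rewrite x_def edot_bits_row natb_F2_eq0 dot_r.
Qed.

Lemma gen_code_odd_like : has (fun r => odd (wtb n r)) G -> odd_like gen_code.
Proof.
move=> /hasP[r r_in odd_r]; exists (bits_row n r).
by rewrite sum_bits_row odd_r; split=> //; apply: mem_gen_code.
Qed.

End GeneratorTable.

Definition set_row n (A : {set 'I_n}) : 'rV['F_2]_n := \row_j (j \in A)%:R.

Lemma wt_set_row n (A : {set 'I_n}) : wt (set_row A) = #|A|.
Proof. by apply: eq_card => j; rewrite !inE mxE natb_F2_eq0 negbK. Qed.

Lemma set_row_inj n : injective (@set_row n).
Proof.
move=> A B AB; apply/setP => j.
have := congr1 (fun x : 'rV_n => x 0 j) AB; rewrite !mxE /=.
by case: (j \in A); case: (j \in B).
Qed.

Lemma packing_bound n r (C : {vspace 'rV['F_2]_n}) :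
  (forall x, x \in C -> x != 0 -> (r.*2 < wt x)%N) ->
  ('C(n, r) * 2 ^ \dim C <= 2 ^ n)%N.
Proof.
move=> C_wt; pose f (p : {set 'I_n} * 'rV_n) := set_row p.1 + p.2.
pose D := setX [set A : {set 'I_n} | #|A| == r] [set x | x \in C].
have f_inj : {in D &, injective f}.
  move=> [A1 c1] [A2 c2]; rewrite !inE /= => /andP[/eqP A1r c1C] /andP[/eqP A2r c2C].
  rewrite /f /= => eq12.
  have diffE : set_row A1 - set_row A2 = c2 - c1.
    by apply/eqP; rewrite subr_eq -(addrK c1 (set_row A1)) eq12 -addrA addrC.
  have sA12 : set_row A1 = set_row A2.
    apply/eqP; rewrite -subr_eq0 diffE; apply: contraT => c12_neq0.
    have := C_wt _ (memvB c2C c1C) c12_neq0; rewrite -diffE.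
    by move=> /leq_trans/(_ (wtB _ _)); rewrite !wt_set_row A1r A2r addnn ltnn.
  by rewrite sA12 in eq12; rewrite (set_row_inj sA12) (addrI _ eq12).
have := max_card [set f p | p in D].
rewrite card_in_imset // cardsX card_draws card_ord cardsE card_vspace.
by rewrite card_mx !card_Fp // mul1n.
Qed.

Lemma is_code_dist_le n k d r (C : {vspace 'rV['F_2]_n}) :
  (2 ^ n < 'C(n, r) * 2 ^ k)%N -> is_code k d C -> (d <= r.*2)%N.
Proof.
move=> packing_fails [dimC [_ C_wt]]; rewrite leqNgt; apply: contraTN packing_fails.
move=> d_gt; rewrite -leqNgt -dimC; apply: packing_bound => x x_in x_neq0.
exact: leq_trans d_gt (C_wt x x_in x_neq0).
Qed.

Definition G14 : seq (seq bool) := [seq [seq b == 1%N | b <- r] | r <-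
  [:: [:: 1; 0; 0; 0; 0; 0; 0; 0; 1; 0; 1; 1; 0; 1];
      [:: 0; 1; 0; 0; 0; 0; 0; 0; 1; 1; 0; 1; 0; 0];
      [:: 0; 0; 1; 0; 0; 0; 0; 0; 1; 0; 0; 1; 1; 1];
      [:: 0; 0; 0; 1; 0; 0; 0; 0; 1; 0; 1; 0; 1; 0];
      [:: 0; 0; 0; 0; 1; 0; 0; 0; 1; 1; 0; 0; 1; 0];
      [:: 0; 0; 0; 0; 0; 1; 0; 0; 1; 1; 1; 1; 1; 0];
      [:: 0; 0; 0; 0; 0; 0; 1; 0; 0; 1; 1; 1; 0; 1];
      [:: 0; 0; 0; 0; 0; 0; 0; 1; 0; 0; 1; 0; 1; 1]]%N].

Definition G16 : seq (seq bool) := [seq [seq b == 1%N | b <- r] | r <-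
  [:: [:: 1; 0; 0; 0; 0; 0; 0; 0; 0; 0; 0; 1; 1; 1; 1; 0];
      [:: 0; 1; 0; 0; 0; 0; 0; 0; 0; 0; 1; 0; 1; 1; 0; 1];
      [:: 0; 0; 1; 0; 0; 0; 0; 0; 0; 0; 1; 1; 0; 0; 0; 1];
      [:: 0; 0; 0; 1; 0; 0; 0; 0; 0; 0; 1; 1; 0; 0; 1; 0];
      [:: 0; 0; 0; 0; 1; 0; 0; 0; 0; 0; 0; 1; 0; 1; 0; 1];
      [:: 0; 0; 0; 0; 0; 1; 0; 0; 0; 0; 1; 0; 0; 0; 1; 1];
      [:: 0; 0; 0; 0; 0; 0; 1; 0; 0; 0; 1; 0; 0; 1; 1; 0];
      [:: 0; 0; 0; 0; 0; 0; 0; 1; 0; 0; 0; 1; 1; 0; 0; 1];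
      [:: 0; 0; 0; 0; 0; 0; 0; 0; 1; 0; 1; 0; 1; 0; 1; 0];
      [:: 0; 0; 0; 0; 0; 0; 0; 0; 0; 1; 1; 1; 1; 1; 0; 0]]%N].

Theorem proposition3p8 :
  ((exists C : {vspace 'rV['F_2]_14}, [/\ is_code 8%N 4%N C, is_LCD C & odd_like C]) /\
   (forall (C : {vspace 'rV['F_2]_14}) (d : nat), is_code 8%N d C -> is_LCD C -> (d <= 4)%N)) /\
  ((exists C : {vspace 'rV['F_2]_16}, [/\ is_code 10%N 4%N C, is_LCD C & odd_like C]) /\
   (forall (C : {vspace 'rV['F_2]_16}) (d : nat), is_code 10%N d C -> is_LCD C -> (d <= 4)%N)).
Proof.
split; split.
- exists (gen_code 14 G14); split.
  + by apply: gen_code_is_code; vm_compute.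
  + by apply: gen_code_LCD; vm_compute.
  + by apply: gen_code_odd_like; vm_compute.
- by move=> C d C_code _; apply: (is_code_dist_le (r := 2)) C_code; vm_compute.
- exists (gen_code 16 G16); split.
  + by apply: gen_code_is_code; vm_compute.
  + by apply: gen_code_LCD; vm_compute.
  + by apply: gen_code_odd_like; vm_compute.
- by move=> C d C_code _; apply: (is_code_dist_le (r := 2)) C_code; vm_compute.
Qed.
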